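(* Let $G=(V,E)$ be an undirected graph and $\mathcal{A}$ an abelian group. Then the Vietoris-Rips homology $H_*^{VR}(G;\mathcal{A})$ of $G$ is isomorphic to the Vietoris-Rips homology $H_*^{VR}(\sigma(G);\mathcal{A})$ of the semi-uniform space $\sigma(G)$.
   Context: The Vietoris-Rips homology $H_*^{VR}(G;\mathcal{A})$ of a graph $G=(V,E)$ is the simplicial homology with coefficients in $\mathcal{A}$ of its clique (flag) complex: the simplicial complex on vertex set $V$ whose simplices are the finite sets of pairwise adjacent vertices. A semi-uniform structure on a set $X$ is a filter $\mathcal{U}$ on $X\times X$ (nonempty, not containing $\emptyset$, closed under supersets and finite intersections) such that every $U\in\mathcal{U}$ contains the diagonal and $U^{-1}=\{(y,x):(x,y)\in U\}\in\mathcal{U}$ for all $U\in\mathcal{U}$. $\sigma(G)=(V,\mathcal{E}_G)$, where $\mathcal{E}_G$ is the filter on $V\times V$ generated by $E\cup\Delta_V$ (edges regarded as symmetric pairs). For $U\in\mathcal{U}$, $X^U$ is the simplicial set with $X^U_n=\{(x_0,\dots,x_n)\in X^{n+1}:(x_i,x_j)\in U\text{ for all }i<j\}$ (entries need not be distinct), face maps $\partial_i$ deleting the $i$-th entry and degeneracies repeating it; $H_*(X^U;\mathcal{A})$ is the homology of $C_*(X^U)\otimes\mathcal{A}$ with $C_n(X^U)$ free abelian on $X^U_n$ and differential $\sum_i(-1)^i\partial_i$. Ordering $\mathcal{U}$ by $U\le U'$ iff $U'\subseteq U$, the Vietoris-Rips homology of $(X,\mathcal{U})$ is $H^{VR}_*(X;\mathcal{A})=\varprojlim_{U\in\mathcal{U}}H_*(X^U;\mathcal{A})$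 along maps induced by the inclusions $X^{U'}\subset X^U$ for $U'\subseteq U$. *)

From HB Require Import structures.
From mathcomp Require Import all_boot all_order all_algebra all_fingroup.
From mathcomp Require Import boolp classical_sets cardinality fsbigop.
Set Implicit Arguments.
Unset Strict Implicit.
Unset Printing Implicit Defensive.
Import GRing.Theory.
Local Open Scope ring_scope.
Local Open Scope classical_set_scope.

(* Abelian groups presented as (sub)setoids: the group is the set of   *)
(* carriers satisfying [sg_mem], modulo the equivalence [sg_eqv], with *)
(* pointwise addition [sg_add].  Homology groups and their inverse     *)
(* limits are presented this way (cycles modulo boundaries).           *)
Record sgroup := SGroup {
  sg_car : Type;
  sg_mem : sg_car -> Prop;
  sg_eqv : sg_car -> sg_car -> Prop;
  sg_add : sg_car -> sg_car -> sg_car }.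
Arguments sg_mem : clear implicits.
Arguments sg_eqv : clear implicits.
Arguments sg_add : clear implicits.

Definition sg_iso (G H : sgroup) : Prop :=
  exists (f : sg_car G -> sg_car H) (g : sg_car H -> sg_car G),
  [/\ (forall x, sg_mem G x -> sg_mem H (f x)) /\
      (forall y, sg_mem H y -> sg_mem G (g y)),
      (forall x x', sg_mem G x -> sg_mem G x' -> sg_eqv G x x' ->
                    sg_eqv H (f x) (f x')),
      (forall y y', sg_mem H y -> sg_mem H y' -> sg_eqv H y y' ->
                    sg_eqv G (g y) (g y')) /\
      (forall x x', sg_mem G x -> sg_mem G x' ->
          sg_eqv H (f (sg_add G x x')) (sg_add H (f x) (f x'))),
      (forall x, sg_mem G x -> sg_eqv G (g (f x)) x) &
      (forall y, sg_mem H y -> sg_eqv H (f (g y)) y)].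

(* Chains with coefficients in A: an element of C_n ⊗ A, with C_n free  *)
(* on a set S of generators, is a finitely supported function S -> A.  *)
Definition fin_supp (T : Type) (A : zmodType) (c : T -> A) : Prop :=
  finite_set [set x | c x != 0].

Definition chain_sub (T : Type) (A : zmodType) (c c' : T -> A) : T -> A :=
  fun x => c x - c' x.

Definition chain_add (T : Type) (A : zmodType) (c c' : T -> A) : T -> A :=
  fun x => c x + c' x.

Definition homologous (T T1 : Type) (A : zmodType)
    (adm1 : (T1 -> A) -> Prop) (bd : (T1 -> A) -> (T -> A)) (c c' : T -> A) :=
  exists b, adm1 b /\ chain_sub c c' = bd b.

(* n-chains live on (n+1)-tuples; bd m : (m+1)-chains -> m-chains *)
Definition is_cycle (X : Type) (A : zmodType)
    (bd : forall m, (m.+2.-tuple X -> A) -> (m.+1.-tuple X -> A)) (n : nat) :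
    (n.+1.-tuple X -> A) -> Prop :=
  match n return (n.+1.-tuple X -> A) -> Prop with
  | 0 => fun _ => True
  | m.+1 => fun c => bd m c = (fun _ => 0)
  end.

Definition tins (X : Type) (n : nat) (i : 'I_n.+2) (v : X) (y : n.+1.-tuple X) :
    n.+2.-tuple X :=
  [tuple match unlift i j with Some k => tnth y k | None => v end | j < n.+2].

Definition signz (A : zmodType) (b : bool) (a : A) : A := if b then - a else a.

Definition VRsimplex (X : Type) (U : set (X * X)) (n : nat) (x : n.+1.-tuple X) :=
  forall i j : 'I_n.+1, (i < j)%N -> U (tnth x i, tnth x j).

Definition VRadm (X : Type) (A : zmodType) (U : set (X * X)) (n : nat)
    (c : n.+1.-tuple X -> A) : Prop :=
  fin_supp c /\ forall x, c x != 0 -> VRsimplex U x.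

(* differential sum_i (-1)^i ∂_i, ∂_i deleting the i-th entry; written on
   coefficients: (bd c)(y) = sum_i sum_{x, ∂_i x = y} (-1)^i c(x) *)
Definition VRbd (X : Type) (A : zmodType) (n : nat) (c : n.+2.-tuple X -> A) :
    n.+1.-tuple X -> A :=
  fun y => \sum_(i < n.+2)
             \sum_(v \in [set: {classic X}]) signz (odd i) (c (tins i (v : X) y)).

Definition VRhom (X : Type) (A : zmodType) (U : set (X * X)) (n : nat) : sgroup :=
  @SGroup (n.+1.-tuple X -> A)
    (fun c => VRadm U c /\ is_cycle (@VRbd X A) c)
    (homologous (@VRadm X A U n.+1) (@VRbd X A n))
    (@chain_add _ A).

(* Vietoris-Rips homology H_n^VR(X; A) = lim_{U ∈ 𝒰} H_n(X^U; A), with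
   bonding maps induced by X^{U'} ⊂ X^U for U' ⊆ U.  An element is a
   compatible family of homology classes, represented by cycles. *)
Definition VRhomology (X : Type) (UU : set (set (X * X))) (A : zmodType)
    (n : nat) : sgroup :=
  @SGroup (set (X * X) -> n.+1.-tuple X -> A)
    (fun F => (forall U, UU U -> sg_mem (VRhom A U n) (F U)) /\
              (forall U U', UU U -> UU U' -> U' `<=` U ->
                   sg_eqv (VRhom A U n) (F U') (F U)))
    (fun F F' => forall U, UU U -> sg_eqv (VRhom A U n) (F U) (F' U))
    (fun F F' U => chain_add (F U) (F' U)).

(* A semi-uniform structure (not needed for the statement; for reference) *)
Definition semi_uniform (X : Type) (UU : set (set (X * X))) : Prop :=
  [/\ UU !=set0 /\ ~ UU set0,
      (forall U U', UU U -> U `<=` U' -> UU U'),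
      (forall U U', UU U -> UU U' -> UU (U `&` U')),
      (forall U x, UU U -> U (x, x)) &
      (forall U, UU U -> UU [set p | U (p.2, p.1)])].

(* σ(G): the filter on V × V generated by E ∪ Δ_V (edges as symmetric pairs) *)
Definition sigmaG (V : Type) (adj : V -> V -> Prop) : set (set (V * V)) :=
  [set U | forall x y, adj x y \/ x = y -> U (x, y)].

(* Simplicial homology of the clique complex, with oriented chains:
   C_n(K) ⊗ A is modelled as the finitely supported A-valued functions on
   ordered n-simplices (tuples of n+1 distinct pairwise adjacent vertices)
   which are alternating: c(x∘s) = sign(s) c(x). *)
Definition clique (V : Type) (adj : V -> V -> Prop) (n : nat) (x : n.+1.-tuple V) :=
  forall i j : 'I_n.+1, i != j -> tnth x i <> tnth x j /\ adj (tnth x i) (tnth x j).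

Definition tperm_tuple (V : Type) (n : nat) (s : 'S_n.+1) (x : n.+1.-tuple V) :
    n.+1.-tuple V := [tuple tnth x (s i) | i < n.+1].

Definition CLadm (V : Type) (A : zmodType) (adj : V -> V -> Prop) (n : nat)
    (c : n.+1.-tuple V -> A) : Prop :=
  [/\ fin_supp c,
      (forall x, c x != 0 -> clique adj x) &
      (forall (s : 'S_n.+1) x, c (tperm_tuple s x) = signz (odd_perm s) (c x))].

(* oriented boundary ∂[v_0,...,v_n] = sum_i (-1)^i [v_0,..,^v_i,..,v_n],
   written on alternating coefficient functions: (∂c)(y) = sum_v c(v :: y) *)
Definition CLbd (V : Type) (A : zmodType) (n : nat) (c : n.+2.-tuple V -> A) :
    n.+1.-tuple V -> A :=
  fun y => \sum_(v \in [set: {classic V}]) c (cons_tuple (v : V) y).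

Definition VRhomology_graph (V : Type) (adj : V -> V -> Prop) (A : zmodType)
    (n : nat) : sgroup :=
  @SGroup (n.+1.-tuple V -> A)
    (fun c => CLadm adj c /\ is_cycle (@CLbd V A) c)
    (homologous (@CLadm V A adj n.+1) (@CLbd V A n))
    (@chain_add _ A).

(* The entourage E = adjacency ∪ diagonal is the least element of σ(G), so a
   compatible family of Vietoris-Rips cycles is determined up to homology by its
   component in X^E, and every cycle of X^E gives a compatible family. It remains
   to compare the ordered chain complex of X^E, whose simplices are tuples of
   pairwise E-related vertices (repetitions allowed), with the oriented chains of
   the clique complex. Antisymmetrization maps ordered chains to oriented ones;
   restriction to the tuples that increase for a fixed well-order of V maps back.
   Oriented -> ordered -> oriented is the identity, and the other composite is
   chain homotopic to the identity by acyclic carriers: the vertices of a simplex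
   of X^E form a clique, and the chains on it are contracted by the cone from its
   first vertex. *)

From mathcomp Require Import all_boot all_order all_algebra all_fingroup.
From mathcomp Require Import boolp classical_sets cardinality fsbigop.
From mathcomp Require Import finmap zify.
From mathcomp Require wochoice.

Set Implicit Arguments.
Unset Strict Implicit.
Unset Printing Implicit Defensive.
Import GRing.Theory.
Local Open Scope ring_scope.
Local Open Scope classical_set_scope.

Section Signs.
Variable A : zmodType.
Implicit Types (b : bool) (a : A).

Lemma signz0 b : signz b (0 : A) = 0.
Proof. by case: b => //=; rewrite oppr0. Qed.

Lemma signzD b a a' : signz b (a + a') = signz b a + signz b a'.
Proof. by case: b => //=; rewrite opprD. Qed.

Lemma signzK b : involutive (@signz A b).
Proof. by case: b => a //=; rewrite opprK. Qed.

Lemma signzNb b a : signz (~~ b) a = - signz b a.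
Proof. by case: b => //=; rewrite opprK. Qed.

Lemma signz_eq0 b a : (signz b a == 0) = (a == 0).
Proof. by case: b => //=; rewrite oppr_eq0. Qed.

Lemma signz_sum b (I : Type) (r : seq I) (P : pred I) (F : I -> A) :
  signz b (\sum_(i <- r | P i) F i) = \sum_(i <- r | P i) signz b (F i).
Proof. by case: b => //=; rewrite -sumrN. Qed.

End Signs.

Section Sums.
Variable A : zmodType.

Lemma sumr_neq0 (I : Type) (r : seq I) (P : pred I) (F : I -> A) :
  \sum_(i <- r | P i) F i != 0 -> exists i, F i != 0.
Proof.
apply: contra_neqP => /forallNP nF; apply: big1 => i _.
by apply/eqP/negPn/negP/nF.
Qed.

Lemma fsumr_neq0 (I : choiceType) (F : I -> A) :
  \sum_(i \in [set: I]) F i != 0 -> exists i, F i != 0.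
Proof.
apply: contra_neqP => /forallNP nF; apply: fsbig1 => i _.
by apply/eqP/negPn/negP/nF.
Qed.

Lemma fsumT_seq (I : choiceType) (r : seq I) (F : I -> A) : uniq r ->
  (forall i, i \notin r -> F i = 0) -> \sum_(i \in [set: I]) F i = \sum_(i <- r) F i.
Proof.
move=> ur Fr; rewrite (fsbigE r) //; last by move=> i _ /Fr.
by apply: eq_bigl => i; rewrite in_setT.
Qed.

Lemma fsumrN (I : choiceType) (F : I -> A) :
  \sum_(i \in [set: I]) - F i = - \sum_(i \in [set: I]) F i.
Proof.
have E : finite_support 0 [set: I] (fun i => - F i) = finite_support 0 [set: I] F.
  rewrite /finite_support; congr (locked_with _ (fset_set _)).
  by apply/seteqP; split => i /= [_ Fi]; split => // Fi0; apply: Fi;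
    [rewrite Fi0 oppr0 | apply/eqP; rewrite -oppr_eq0; apply/eqP].
by rewrite E sumrN.
Qed.

End Sums.

(** * Tuples and a well-order of the vertices *)

Section Tuples.
Variable T : Type.

Lemma tnth_tperm_tupleV n (s : 'S_n.+1) (x : n.+1.-tuple T) k :
  tnth x k = tnth (tperm_tuple s x) ((s^-1)%g k).
Proof. by rewrite tnth_mktuple permKV. Qed.

Lemma tperm_tupleM n (s t : 'S_n.+1) (x : n.+1.-tuple T) :
  tperm_tuple s (tperm_tuple t x) = tperm_tuple (s * t)%g x.
Proof. by apply: eq_from_tnth => i; rewrite !tnth_mktuple permM. Qed.

Lemma tperm_tuple1 n (x : n.+1.-tuple T) : tperm_tuple 1%g x = x.
Proof. by apply: eq_from_tnth => i; rewrite !tnth_mktuple perm1. Qed.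

Lemma behead_cons_tuple n (v : T) (y : n.-tuple T) : behead_tuple (cons_tuple v y) = y.
Proof. exact: val_inj. Qed.

Lemma tnth_behead_tuple n (z : n.+1.-tuple T) k :
  tnth (behead_tuple z) k = tnth z (lift ord0 k).
Proof. by case/tupleP: z => x t; rewrite tnthS behead_cons_tuple. Qed.

Lemma tins_seq n (i : 'I_n.+2) (v : T) (y : n.+1.-tuple T) :
  val (tins i v y) = take i y ++ v :: drop i y.
Proof.
have il : (i <= size y)%N by rewrite size_tuple -ltnS.
apply: (@eq_from_nth _ v).
  rewrite size_tuple size_cat /= size_takel // size_drop size_tuple.
  by have := ltn_ord i; lia.
move=> k; rewrite size_tuple => kl.
rewrite -[k]/(val (Ordinal kl)) -tnth_nth tnth_mktuple nth_cat size_takel //.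
case: unliftP => [j|] /(congr1 val) /= ->; last by rewrite ltnn subnn.
rewrite /bump; case: (leqP i j) => ij.
  by rewrite add1n ltnNge (leq_trans ij (leqnSn _)) subSn //= nth_drop subnKC // -tnth_nth.
by rewrite add0n ij nth_take // -tnth_nth.
Qed.

Lemma tnth_tins n (i : 'I_n.+2) (v : T) (y : n.+1.-tuple T) : tnth (tins i v y) i = v.
Proof. by rewrite tnth_mktuple unlift_none. Qed.

Lemma tnth_tins_lift n (i : 'I_n.+2) (v : T) (y : n.+1.-tuple T) k :
  tnth (tins i v y) (lift i k) = tnth y k.
Proof. by rewrite tnth_mktuple liftK. Qed.

Lemma tins0 n (v : T) (y : n.+1.-tuple T) : tins ord0 v y = cons_tuple v y.
Proof. by apply: val_inj; rewrite tins_seq take0 drop0. Qed.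

Lemma tins_lift0 n (j : 'I_n.+2) (v : T) (y : n.+2.-tuple T) :
  tins (lift ord0 j) v y = cons_tuple (thead y) (tins j v (behead_tuple y)).
Proof.
apply: val_inj; rewrite tins_seq.
have -> : val (cons_tuple (thead y) (tins j v (behead_tuple y))) =
  thead y :: val (tins j v (behead_tuple y)) by [].
by rewrite tins_seq; case/tupleP: y.
Qed.

Lemma tins_tperm n (i : 'I_n.+2) (v : T) (s : 'S_n.+1) (y : n.+1.-tuple T) :
  tins i v (tperm_tuple s y) = tperm_tuple (lift_perm i ord0 s) (cons_tuple v y).
Proof.
apply: eq_from_tnth => j; rewrite /tins !tnth_mktuple.
case: unliftP => [k ->|->]; first by rewrite lift_perm_lift tnthS tnth_mktuple.
by rewrite lift_perm_id.
Qed.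

End Tuples.

Section VertexOrder.
Variable T : eqType.

(* Any total order would do: it only serves to single out one ordering of each
   clique. *)
Definition wo_le : rel T := sval (wochoice.well_ordering_principle T).

Let wo_le_wo : wochoice.wo_chain wo_le predT :=
  wochoice.withinW (A := predT) (svalP (wochoice.well_ordering_principle T)).

Lemma wo_le_total : total wo_le.
Proof. by move=> a b; apply: (wochoice.wo_chainW wo_le_wo). Qed.

Lemma wo_le_anti : antisymmetric wo_le.
Proof. by move=> a b; apply: (wochoice.wo_chain_antisymmetric wo_le_wo). Qed.

Lemma wo_le_trans : transitive wo_le.
Proof.
move=> b a c ab bc; pose abc := [:: a; b; c].
have [|z [[zabc lbz] _]] := svalP (wochoice.well_ordering_principle T) [pred x | x \in abc].
  by exists a; rewrite !inE eqxx.
have lb x : x \in abc -> wo_le z x by apply: lbz.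
move: zabc; rewrite !inE => /or3P[] /eqP zE; subst z.
- by apply: lb; rewrite !inE eqxx !orbT.
- have ba : wo_le b a by apply: lb; rewrite !inE eqxx.
  by have -> : a = b by apply: wo_le_anti; rewrite ab ba.
- have cb : wo_le c b by apply: lb; rewrite !inE eqxx !orbT.
  by have <- : b = c by apply: wo_le_anti; rewrite bc cb.
Qed.

Definition wo_lt (a b : T) : bool := (a != b) && wo_le a b.

Lemma wo_lt_asym a b : wo_lt a b -> wo_lt b a -> False.
Proof.
move=> /andP[ab Rab] /andP[_ Rba]; have eab : a = b by apply: wo_le_anti; rewrite Rab Rba.
by rewrite eab eqxx in ab.
Qed.

Lemma wo_lt_trans : transitive wo_lt.
Proof.
move=> b a c /andP[ab Rab] /andP[bc Rbc]; rewrite /wo_lt (wo_le_trans Rab Rbc) andbT.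
by apply: contraNneq bc => ac; subst c; apply/eqP/wo_le_anti; rewrite Rab Rbc.
Qed.

Lemma wo_lt_total a b : a != b -> wo_lt a b || wo_lt b a.
Proof. by move=> ab; rewrite /wo_lt ab eq_sym ab; apply: wo_le_total. Qed.

Definition increasing n (x : n.-tuple T) : bool := pairwise wo_lt x.

Lemma increasing_sort n (x : n.+1.-tuple T) : uniq x ->
  exists s : 'S_n.+1, increasing (tperm_tuple s x).
Proof.
move=> ux; have /tuple_permP [p Hp] : perm_eq (sort wo_le x) x by rewrite perm_sort.
exists p; rewrite /increasing /tperm_tuple -Hp.
have := sort_sorted wo_le_total x; rewrite sorted_pairwise; last exact: wo_le_trans.
have := sort_uniq wo_le x; rewrite ux uniq_pairwise => us ss.
by rewrite /wo_lt (pairwise_relI (fun a b => a != b) wo_le) us ss.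
Qed.

Lemma increasing_sort_uniq n (x : n.+1.-tuple T) (s s' : 'S_n.+1) : uniq x ->
  increasing (tperm_tuple s x) -> increasing (tperm_tuple s' x) -> s = s'.
Proof.
move=> ux i1 i2; have pe (t : 'S_n.+1) : perm_eq (tperm_tuple t x) x.
  by apply/tuple_permP; exists t.
have E : val (tperm_tuple s x) = val (tperm_tuple s' x).
  apply: (pairwise_eq _ i1 i2); first by move=> a b /andP[/wo_lt_asym].
  by apply: (perm_trans (pe s)); rewrite perm_sym.
apply/permP => i; apply/(tuple_uniqP x ux).
have : tnth (tperm_tuple s x) i = tnth (tperm_tuple s' x) i.
  rewrite (tnth_nth (tnth x i) (tperm_tuple s x)).
  by rewrite (tnth_nth (tnth x i) (tperm_tuple s' x)) E.
by rewrite !tnth_mktuple.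
Qed.

Lemma increasing_tins n (i : 'I_n.+2) (v : T) (y : n.+1.-tuple T) :
  increasing (tins i v y) -> increasing y.
Proof.
rewrite /increasing tins_seq pairwise_cat /= allrel_consr.
move=> /and3P[/andP[_ h1] h2 /andP[_ h3]].
by rewrite -(cat_take_drop i y) pairwise_cat h1 h2 h3.
Qed.

Lemma increasing_tins_inj n (i j : 'I_n.+2) (v : T) (y : n.+1.-tuple T) :
  increasing (tins i v y) -> increasing (tins j v y) -> i = j.
Proof.
wlog ij : i j / (i < j)%N.
  move=> H h1 h2; case: (ltngtP i j) => c; first exact: H.
    exact/esym/H.
  exact: val_inj.
rewrite /increasing !tins_seq !pairwise_cat /= => /and3P[_ _ /andP[h1 _]] /and3P[h2 _ _].
have jy : (j <= size y)%N by rewrite size_tuple -ltnS.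
have e1 : nth v y i \in drop i y.
  rewrite -[i in nth _ _ i]addn0 -nth_drop; apply: mem_nth.
  by rewrite size_drop subn_gt0 (leq_trans ij).
have e2 : nth v y i \in take j y.
  by rewrite -(@nth_take j) //; apply: mem_nth; rewrite size_takel.
move: h2; rewrite allrel_consr => /andP[/allP/(_ _ e2) l1 _].
by move/allP: h1 => /(_ _ e1) /(wo_lt_asym l1).
Qed.

Lemma increasing_tins_exists n (v : T) (y : n.+1.-tuple T) : increasing y -> v \notin y ->
  exists i : 'I_n.+2, increasing (tins i v y).
Proof.
have ins (s : seq T) : pairwise wo_lt s -> v \notin s ->
    exists2 i, (i <= size s)%N & pairwise wo_lt (take i s ++ v :: drop i s).
  elim: s => [|a s IH] /=; first by exists 0%N.
  rewrite inE negb_or => /andP[alls ps] /andP[va vs].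
  case/orP: (wo_lt_total va) => [lva|lav].
    exists 0%N => //=; rewrite alls ps lva /= andbT.
    by apply/allP => x xs; apply: (wo_lt_trans lva); move/allP: alls; apply.
  have [i il Hi] := IH ps vs.
  exists i.+1 => //=; rewrite Hi andbT all_cat /= lav /=.
  by rewrite -{1}(cat_take_drop i s) all_cat in alls.
move=> iy vy; have [i il Hi] := ins _ iy vy.
have il' : (i < n.+2)%N by rewrite size_tuple in il.
by exists (Ordinal il'); rewrite /increasing tins_seq.
Qed.

Lemma sum_increasing_tins (A : zmodType) n (v : T) (y : n.+1.-tuple T) (a : A) :
  v \notin y ->
  \sum_(i < n.+2) (if increasing (tins i v y) then a else 0) =
  if increasing y then a else 0.
Proof.
move=> vy; case: ifP => iy; last first.
  by apply: big1 => i _; case: ifP => // /increasing_tins; rewrite iy.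
have [i0 H0] := increasing_tins_exists iy vy.
rewrite (bigD1 i0) //= H0 big1 ?addr0 // => i ii0.
by case: ifP => // Hi; rewrite (increasing_tins_inj Hi H0) eqxx in ii0.
Qed.

End VertexOrder.

Lemma big_perm_lift (R : Type) (idx : R) (op : Monoid.com_law idx) n
    (F : 'S_n.+2 -> R) :
  \big[op/idx]_(t : 'S_n.+2) F t =
  \big[op/idx]_(i : 'I_n.+2) \big[op/idx]_(s : 'S_n.+1) F (lift_perm i ord0 s).
Proof.
rewrite (partition_big (fun t : 'S_n.+2 => (t^-1)%g ord0) predT) //=.
apply: eq_bigr => i0 _.
rewrite (reindex (lift_perm i0 ord0)); last first.
  pose ulsf i (s : 'S_n.+2) k := odflt k (unlift (s i) (s (lift i k))).
  have ulsfK i (s : 'S_n.+2) k: lift (s i) (ulsf i s k) = s (lift i k).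
    rewrite /ulsf; have:= neq_lift i k.
    by rewrite -(can_eq (permK s)) => /unlift_some[] ? ? ->.
  have inj_ulsf: injective (ulsf i0 _).
    move=> s; apply: can_inj (ulsf (s i0) s^-1%g) _ => k'.
    by rewrite {1}/ulsf ulsfK !permK liftK.
  exists (fun s => perm (inj_ulsf s)) => [s _ | s].
    by apply/permP=> k'; rewrite permE /ulsf lift_perm_lift lift_perm_id liftK.
  move/eqP => si0; have {}si0 : s i0 = ord0 by rewrite -si0 permKV.
  apply/permP=> k.
  case: (unliftP i0 k) => [k'|] ->; rewrite ?lift_perm_id //.
  by rewrite lift_perm_lift -si0 permE ulsfK.
apply: eq_bigl => s; apply/eqP.
by rewrite -{2}(lift_perm_id i0 ord0 s) permK.
Qed.

(** * Finitely supported chains *)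

Section FinAdditive.
Variable A : zmodType.

Lemma fin_supp_seq (I : choiceType) (c : I -> A) :
  fin_supp c -> exists r : seq I, uniq r /\ forall x, c x != 0 -> x \in r.
Proof.
move=> fc; exists (fset_set [set x | c x != 0] : seq I); split; first exact: fset_uniq.
by move=> x cx; rewrite in_fset_set //; apply: mem_set.
Qed.

Lemma seq_fin_supp (I : choiceType) (c : I -> A) (r : seq I) :
  (forall x, c x != 0 -> x \in r) -> fin_supp c.
Proof. by move=> H; apply: (sub_finite_set _ (finite_seq r)) => x /= /H. Qed.

Lemma fin_supp0 (I : Type) : fin_supp (fun _ : I => 0 : A).
Proof. by apply: (@sub_finite_set _ _ set0) => // x /=; rewrite eqxx. Qed.

Lemma fin_supp_add (I : Type) (c c' : I -> A) :
  fin_supp c -> fin_supp c' -> fin_supp (chain_add c c').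
Proof.
move=> f f'; apply: (@sub_finite_set _ _ ([set x | c x != 0] `|` [set x | c' x != 0])).
  move=> x /= cc'; case: (eqVneq (c x) 0) => [c0|]; last by left.
  by right; move: cc'; rewrite /chain_add c0 add0r.
by rewrite finite_setU.
Qed.

Lemma fin_suppN (I : Type) (c : I -> A) : fin_supp c -> fin_supp (fun x => - c x).
Proof. by apply: sub_finite_set => x /=; rewrite oppr_eq0. Qed.

Lemma fin_supp_sub (I : Type) (c c' : I -> A) :
  fin_supp c -> fin_supp c' -> fin_supp (chain_sub c c').
Proof. by move=> f /fin_suppN f'; apply: (fin_supp_add f f'). Qed.

Definition delta_chain (I : eqType) (x : I) (a : A) : I -> A :=
  fun z => if z == x then a else 0.

Lemma fin_supp_delta (I : choiceType) (x : I) a : fin_supp (delta_chain x a).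
Proof.
apply: (@seq_fin_supp _ _ [:: x]) => z; rewrite /delta_chain.
by case: (eqVneq z x) => [->|]; rewrite ?mem_head ?eqxx.
Qed.

Lemma delta_chain0 (I : eqType) (x : I) : delta_chain x 0 = fun _ => 0.
Proof. by apply: funext => z; rewrite /delta_chain if_same. Qed.

Lemma delta_chainD (I : eqType) (x : I) a b :
  delta_chain x (a + b) = chain_add (delta_chain x a) (delta_chain x b).
Proof. by apply: funext => z; rewrite /delta_chain /chain_add; case: ifP; rewrite ?addr0. Qed.

Lemma fin_supp_sum (X I : Type) (r : seq I) (f : I -> X -> A) :
  (forall i, fin_supp (f i)) -> fin_supp (fun z => \sum_(i <- r) f i z).
Proof.
move=> ff; elim: r => [|i r IH].
  by apply: (@sub_finite_set _ _ set0) => // z /=; rewrite big_nil eqxx.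
by apply: (sub_finite_set _ (fin_supp_add (ff i) IH)) => z /=; rewrite big_cons.
Qed.

Lemma chain_delta_sum (I : eqType) (c : I -> A) (S : seq I) : uniq S ->
  (forall x, c x != 0 -> x \in S) -> c = fun z => \sum_(x <- S) delta_chain x (c x) z.
Proof.
move=> uS HS; apply: funext => z; rewrite /delta_chain.
case: (boolP (z \in S)) => zS.
  rewrite (bigD1_seq z) //= eqxx big1 ?addr0 // => x xz.
  by rewrite eq_sym (negbTE xz).
rewrite big1_seq => [|x /= xS]; last by case: (eqVneq z x) => // e; rewrite e xS in zS.
by apply/eqP; apply: contraT => /HS; rewrite (negbTE zS).
Qed.

(* [VRbd] sums over all vertices with a finitely supported sum, which is 0 when
   the support is infinite; so the boundary and the maps built from it are
   additive only on finitely supported chains. *)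
Definition fin_additive (X Y : Type) (L : (X -> A) -> (Y -> A)) :=
  (forall c, fin_supp c -> fin_supp (L c)) /\
  (forall c c', fin_supp c -> fin_supp c' -> L (chain_add c c') = chain_add (L c) (L c')).

Section Laws.
Variables (X Y : Type) (L : (X -> A) -> (Y -> A)).
Hypothesis hL : fin_additive L.

Lemma fin_additive0 : L (fun _ => 0) = fun _ => 0.
Proof.
have := hL.2 _ _ (@fin_supp0 X) (@fin_supp0 X).
have -> : chain_add (fun _ : X => 0 : A) (fun _ => 0) = fun _ => 0.
  by apply: funext => x; rewrite /chain_add addr0.
move=> E; apply: funext => y; apply: (@addIr _ (L (fun _ => 0) y)).
by rewrite add0r {3}E.
Qed.

Lemma fin_additiveB (c c' : X -> A) : fin_supp c -> fin_supp c' ->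
  L (chain_sub c c') = chain_sub (L c) (L c').
Proof.
move=> f f'; have fd := fin_supp_sub f f'.
have E : c = chain_add (chain_sub c c') c'.
  by apply: funext => x; rewrite /chain_add /chain_sub subrK.
apply: funext => y; rewrite /chain_sub {2}E (hL.2 _ _ fd f') /chain_add.
by rewrite addrK.
Qed.

Lemma fin_additive_sum (I : Type) (r : seq I) (f : I -> X -> A) :
  (forall i, fin_supp (f i)) ->
  L (fun z => \sum_(i <- r) f i z) = fun y => \sum_(i <- r) L (f i) y.
Proof.
move=> ff; elim: r => [|i r IH].
  have -> : (fun z => \sum_(i <- [::]) f i z) = fun _ => 0.
    by apply: funext => z; rewrite big_nil.
  by rewrite fin_additive0; apply: funext => y; rewrite big_nil.
have -> : (fun z => \sum_(j <- i :: r) f j z) = chain_add (f i) (fun z => \sum_(j <- r) f j z).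
  by apply: funext => z; rewrite big_cons.
rewrite hL.2 //; last exact: fin_supp_sum.
by apply: funext => y; rewrite big_cons /chain_add -(congr1 (fun g => g y) IH).
Qed.

End Laws.

Lemma fin_additive_id (X : Type) : fin_additive (@id (X -> A)).
Proof. by []. Qed.

Lemma fin_additive_comp (X Y Z : Type) (L : (X -> A) -> (Y -> A))
    (L' : (Y -> A) -> (Z -> A)) :
  fin_additive L -> fin_additive L' -> fin_additive (L' \o L).
Proof.
move=> [fL aL] [fL' aL']; split => [c fc|c c' fc fc'] /=; first exact/fL'/fL.
by rewrite aL // aL' //; apply: fL.
Qed.

Lemma fin_additive_add (X Y : Type) (L L' : (X -> A) -> (Y -> A)) :
  fin_additive L -> fin_additive L' -> fin_additive (fun c => chain_add (L c) (L' c)).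
Proof.
move=> [fL aL] [fL' aL']; split => [c fc|c c' fc fc'].
  by apply: fin_supp_add; [apply: fL | apply: fL'].
by rewrite aL // aL' //; apply: funext => y; rewrite /chain_add addrACA.
Qed.

Lemma fin_additive_sub (X Y : Type) (L L' : (X -> A) -> (Y -> A)) :
  fin_additive L -> fin_additive L' -> fin_additive (fun c => chain_sub (L c) (L' c)).
Proof.
move=> [fL aL] [fL' aL']; split => [c fc|c c' fc fc'].
  by apply: fin_supp_sub; [apply: fL | apply: fL'].
by rewrite aL // aL' //; apply: funext => y; rewrite /chain_add /chain_sub opprD addrACA.
Qed.

Lemma fin_additive_delta (X : choiceType) (Y : Type) (L L' : (X -> A) -> (Y -> A))
    (c : X -> A) :
  fin_additive L -> fin_additive L' -> fin_supp c ->
  (forall x, c x != 0 -> L (delta_chain x (c x)) = L' (delta_chain x (c x))) ->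
  L c = L' c.
Proof.
move=> hL hL' fc Lc; have [S [uS HS]] := fin_supp_seq fc.
have fd x : fin_supp (delta_chain x (c x)) by apply: fin_supp_delta.
rewrite (chain_delta_sum uS HS) !fin_additive_sum //.
apply: funext => y; apply: eq_bigr => x _.
case: (eqVneq (c x) 0) => [->|/Lc -> //].
by rewrite delta_chain0 !fin_additive0.
Qed.

End FinAdditive.

Arguments fin_additive_id {A X}.

(** * The ordered chain complex *)

Section OrderedChains.
Variables (V : Type) (A : zmodType).
Local Notation T := {classic V}.

Definition supp_in n (W : seq T) (c : n.-tuple T -> A) :=
  forall z, c z != 0 -> forall k, tnth z k \in W.

Fixpoint tuples_over (W : seq T) n : seq (n.-tuple T) :=
  if n is m.+1 then [seq cons_tuple v t | v <- W, t <- tuples_over W m] else [:: [tuple]].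

Lemma mem_tuples_over (W : seq T) n (z : n.-tuple T) :
  (forall k, tnth z k \in W) -> z \in tuples_over W n.
Proof.
elim: n z => [|n IH] z Hz /=; first by rewrite tuple0 inE.
case/tupleP: z Hz => x t Hz.
apply: (allpairs_f (fun v (t : n.-tuple T) => cons_tuple v t)); first exact: (Hz ord0).
by apply: IH => k; have := Hz (lift ord0 k); rewrite tnthS.
Qed.

Lemma supp_in_fin n W (c : n.-tuple T -> A) : supp_in W c -> fin_supp c.
Proof. by move=> H; apply: (@seq_fin_supp _ _ _ (tuples_over W n)) => z /H /mem_tuples_over. Qed.

Lemma fin_supp_in n (c : n.-tuple T -> A) : fin_supp c -> exists W, uniq W /\ supp_in W c.
Proof.
case/fin_supp_seq => r [_ Hr]; exists (undup (flatten [seq val z | z <- r])).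
split=> [|z /Hr zr k]; first exact: undup_uniq.
by rewrite mem_undup; apply/flattenP; exists (val z); [apply: map_f | apply: mem_tnth].
Qed.

Lemma fin_supp_in2 n (c c' : n.-tuple T -> A) : fin_supp c -> fin_supp c' ->
  exists W, [/\ uniq W, supp_in W c & supp_in W c'].
Proof.
move=> /fin_supp_in [W1 [_ H1]] /fin_supp_in [W2 [_ H2]].
exists (undup (W1 ++ W2)); split; first exact: undup_uniq.
  by move=> z /H1 H k; rewrite mem_undup mem_cat H.
by move=> z /H2 H k; rewrite mem_undup mem_cat H orbT.
Qed.

Lemma supp_in_add n W (c c' : n.-tuple T -> A) : supp_in W c -> supp_in W c' ->
  supp_in W (chain_add c c').
Proof.
move=> H1 H2 z; rewrite /chain_add; case: (eqVneq (c z) 0) => [->|/H1 //].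
by rewrite add0r; apply: H2.
Qed.

Lemma supp_in_sub n W (c c' : n.-tuple T -> A) : supp_in W c -> supp_in W c' ->
  supp_in W (chain_sub c c').
Proof.
move=> H1 H2 z; rewrite /chain_sub; case: (eqVneq (c z) 0) => [->|/H1 //].
by rewrite sub0r oppr_eq0; apply: H2.
Qed.

Lemma supp_in_delta n W (x : n.-tuple T) (a : A) :
  (forall k, tnth x k \in W) -> supp_in W (delta_chain x a).
Proof. by move=> H z; rewrite /delta_chain; case: (eqVneq z x) => [->|]; rewrite ?eqxx. Qed.

Definition cone n (v : T) (c : n.+1.-tuple T -> A) : n.+2.-tuple T -> A :=
  fun z => if thead z == v then c (behead_tuple z) else 0.

Lemma supp_in_cone n W v (c : n.+1.-tuple T -> A) :
  v \in W -> supp_in W c -> supp_in W (cone v c).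
Proof.
move=> vW H z; rewrite /cone; case: (eqVneq (thead z) v) => [hz|_]; last by rewrite eqxx.
move=> /H Hb k; case: (unliftP ord0 k) => [k'|] ->; last by rewrite -[tnth z ord0]/(thead z) hz.
by rewrite -tnth_behead_tuple; apply: Hb.
Qed.

Lemma fin_supp_cone n v (c : n.+1.-tuple T -> A) : fin_supp c -> fin_supp (cone v c).
Proof.
move=> /fin_supp_in [W [_ H]]; apply: (@supp_in_fin _ (v :: W)).
by apply: supp_in_cone (mem_head _ _) _ => z /H Hz k; rewrite inE Hz orbT.
Qed.

Lemma cone_fin_additive n v : fin_additive (@cone n v).
Proof.
split=> [c|c c' _ _]; first exact: fin_supp_cone.
by apply: funext => z; rewrite /cone /chain_add; case: ifP; rewrite ?addr0.
Qed.

Lemma VRbd_neq0 n (c : n.+2.-tuple T -> A) y : VRbd c y != 0 ->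
  exists i v, c (tins i v y) != 0.
Proof.
by rewrite /VRbd => /sumr_neq0 [i] /fsumr_neq0 [v]; rewrite signz_eq0 => H; exists i, v.
Qed.

Lemma supp_in_VRbd n W (c : n.+2.-tuple T -> A) : supp_in W c -> supp_in W (VRbd c).
Proof. by move=> H y /VRbd_neq0 [i [v /H Hc]] k; rewrite -(tnth_tins_lift i v). Qed.

Lemma VRbd_seq n W (c : n.+2.-tuple T -> A) y : uniq W -> supp_in W c ->
  VRbd c y = \sum_(i < n.+2) \sum_(v <- W) signz (odd i) (c (tins i v y)).
Proof.
move=> uW H; apply: eq_bigr => i _; rewrite (fsumT_seq uW) // => v vW.
case: (eqVneq (c (tins i v y)) 0) => [->|]; first exact: signz0.
by move/H/(_ i); rewrite tnth_tins (negbTE vW).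
Qed.

Lemma fin_supp_VRbd n (c : n.+2.-tuple T -> A) : fin_supp c -> fin_supp (VRbd c).
Proof. by move=> /fin_supp_in [W [_ H]]; apply/supp_in_fin/supp_in_VRbd/H. Qed.

Lemma VRbd_fin_additive n : fin_additive (@VRbd T A n).
Proof.
split=> [c|c c' f f']; first exact: fin_supp_VRbd.
have [W [uW H1 H2]] := fin_supp_in2 f f'.
apply: funext => y; rewrite (VRbd_seq y uW (supp_in_add H1 H2)).
rewrite {2}/chain_add (VRbd_seq y uW H1) (VRbd_seq y uW H2) -big_split /=.
by apply: eq_bigr => i _; rewrite -big_split /=; apply: eq_bigr => v _; apply: signzD.
Qed.

Lemma VRbd_cone n (v : T) (c : n.+2.-tuple T -> A) :
  VRbd (cone v c) = chain_sub c (cone v (VRbd c)).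
Proof.
apply: funext => y; rewrite /chain_sub {1}/VRbd big_ord_recl /=.
have -> : \sum_(u \in [set: T]) cone v c (tins ord0 u y) = c y.
  rewrite (@fsumT_seq _ _ [:: v]) // ?big_seq1 => [|u]; rewrite /cone tins0 /=.
    by rewrite eqxx behead_cons_tuple.
  by rewrite inE => /negbTE ->.
congr (_ + _); rewrite /cone; case: eqP => [hv|nv]; last first.
  rewrite oppr0; apply: big1 => j _; rewrite fsbig1 // => u _.
  by rewrite tins_lift0 theadE (introF eqP nv) signz0.
rewrite /VRbd -sumrN; apply: eq_bigr => j _; rewrite -fsumrN; apply: eq_fsbigr => u _.
by rewrite add0n signzNb tins_lift0 theadE hv eqxx behead_cons_tuple.
Qed.

Lemma VRbd_cone0 (v : T) (e : 1.-tuple T -> A) :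
  VRbd (cone v e) = fun y => e y -
    (if thead y == v then \sum_(u \in [set: T]) e [tuple u] else 0).
Proof.
apply: funext => y; rewrite /VRbd big_ord_recl big_ord1 /=.
have -> : \sum_(u \in [set: T]) cone v e (tins ord0 u y) = e y.
  rewrite (@fsumT_seq _ _ [:: v]) // ?big_seq1 => [|u]; rewrite /cone tins0 /=.
    by rewrite eqxx behead_cons_tuple.
  by rewrite inE => /negbTE ->.
have E u : tins (lift ord0 ord0) u y = cons_tuple (thead y) [tuple u].
  by apply: val_inj; rewrite tins_seq; case/tupleP: y => y0 t; rewrite tuple0.
congr (_ + _); rewrite /cone; case: eqP => [hv|nv]; last first.
  by rewrite oppr0 fsbig1 // => u _; rewrite E theadE (introF eqP nv) oppr0.
by rewrite -fsumrN; apply: eq_fsbigr => u _; rewrite E theadE hv eqxx behead_cons_tuple.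
Qed.

Lemma sum_VRbd_vertex (d : 2.-tuple T -> A) : fin_supp d ->
  \sum_(u \in [set: T]) VRbd d [tuple u] = 0.
Proof.
move=> /fin_supp_in [W [uW H]].
rewrite (fsumT_seq uW); last first.
  move=> u uW'; apply/eqP; apply: contraNT uW' => /(supp_in_VRbd H) /(_ ord0).
  by rewrite tnth0.
have E0 u w : tins ord0 w [tuple u] = [tuple w; u] by apply/val_inj; rewrite tins_seq.
have E1 u w : tins (lift ord0 ord0) w [tuple u] = [tuple u; w].
  by apply/val_inj; rewrite tins_seq.
under eq_bigr => u _ do rewrite (VRbd_seq _ uW H) big_ord_recl big_ord1 /= sumrN.
rewrite big_split /= sumrN exchange_big /= -sumrB big1 // => w _.
by rewrite -sumrB big1 // => u _; rewrite E0 E1 subrr.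
Qed.

Lemma delta_chain_cone n (x : n.+2.-tuple T) (a : A) :
  delta_chain x a = cone (thead x) (delta_chain (behead_tuple x) a).
Proof.
apply: funext => z; rewrite /delta_chain /cone.
case/tupleP: x => x0 xt; case/tupleP: z => z0 zt; rewrite !theadE !behead_cons_tuple.
case: (eqVneq z0 x0) => [->|ne].
  case: (eqVneq zt xt) => [->|ne']; first by rewrite !eqxx.
  by case: eqP => // /(congr1 val) [] /val_inj e; rewrite e eqxx in ne'.
by case: eqP => // /(congr1 val) [] e; rewrite e eqxx in ne.
Qed.

Lemma VRbdK_delta n (x : n.+3.-tuple T) (a : A) :
  VRbd (VRbd (delta_chain x a)) = fun _ => 0.
Proof.
have fdc m (y : m.+3.-tuple T) :
    fin_supp (cone (thead y) (VRbd (delta_chain (behead_tuple y) a))).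
  by apply/fin_supp_cone/fin_supp_VRbd/fin_supp_delta.
elim: n x => [|m IH] x; rewrite delta_chain_cone VRbd_cone;
  rewrite (fin_additiveB (VRbd_fin_additive _) (fin_supp_delta _ _) (fdc _ x)).
  rewrite VRbd_cone0 (sum_VRbd_vertex (fin_supp_delta _ _)).
  by apply: funext => y; rewrite /chain_sub if_same subr0 subrr.
rewrite VRbd_cone IH (fin_additive0 (cone_fin_additive _ _)).
by apply: funext => y; rewrite /chain_sub subr0 subrr.
Qed.

End OrderedChains.

Arguments VRbd_fin_additive {V A n}.
Arguments cone_fin_additive {V A n} v.

Lemma VRadm_mono (X : Type) (A : zmodType) (U U' : set (X * X)) n
    (c : n.+1.-tuple X -> A) :
  U `<=` U' -> VRadm U c -> VRadm U' c.
Proof. by move=> sU [fc H]; split=> // x /H sx i j ij; apply/sU/sx. Qed.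

Lemma VRadm_chain_sub (X : Type) (A : zmodType) (U : set (X * X)) n
    (c c' : n.+1.-tuple X -> A) :
  VRadm U c -> VRadm U c' -> VRadm U (chain_sub c c').
Proof.
case=> f1 H1 [f2 H2]; split=> [|x]; first exact: fin_supp_sub.
by rewrite /chain_sub; case: (eqVneq (c x) 0) => [->|/H1 //]; rewrite sub0r oppr_eq0 => /H2.
Qed.

(** * Comparison with the oriented chains of the clique complex *)

Lemma alt_sum_repeat (A : zmodType) (T : Type) n (F : n.+1.-tuple T -> A)
    (z : n.+1.-tuple T) (i j : 'I_n.+1) :
  i != j -> tnth z i = tnth z j ->
  \sum_(t : 'S_n.+1) signz (odd_perm t) (F (tperm_tuple t z)) = 0.
Proof.
move=> ij zij; pose tau := tperm i j.
have Htau t : tperm_tuple (t * tau)%g z = tperm_tuple t z.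
  by apply: eq_from_tnth => k; rewrite !tnth_mktuple permM /tau; case: tpermP => // ->.
have odd_tau t : odd_perm (t * tau)%g = ~~ odd_perm t.
  by rewrite odd_permM odd_tperm ij addbT.
rewrite (bigID (fun t => odd_perm t)) /= (reindex_inj (mulIg tau)) /=.
under eq_bigl => t do rewrite odd_tau.
under eq_bigr => t _ do rewrite Htau odd_tau signzNb.
by rewrite sumrN addNr.
Qed.

Lemma VRsimplex_tperm (X : Type) (U : set (X * X)) n (s : 'S_n.+1)
    (x : n.+1.-tuple X) (i j : 'I_n.+1) :
  VRsimplex U (tperm_tuple s x) -> i != j ->
  U (tnth x i, tnth x j) \/ U (tnth x j, tnth x i).
Proof.
move=> sx ij; have [pq|qp|/val_inj epq] := ltngtP ((s^-1)%g i) ((s^-1)%g j).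
- by left; have := sx _ _ pq; rewrite !tnth_mktuple !permKV.
- by right; have := sx _ _ qp; rewrite !tnth_mktuple !permKV.
- by move/perm_inj: epq ij => ->; rewrite eqxx.
Qed.

Section Comparison.
Variables (V : Type) (adj : V -> V -> Prop).
Hypothesis adj_sym : forall x y, adj x y -> adj y x.
Variable A : zmodType.
Local Notation T := {classic V}.

Definition graph_entourage : set (V * V) := fun p => adj p.1 p.2 \/ p.1 = p.2.

Lemma graph_entourage_sym p q : graph_entourage (p, q) -> graph_entourage (q, p).
Proof. by case=> /= [/adj_sym|->]; [left|right]. Qed.

Lemma clique_uniq n (x : n.+1.-tuple T) : clique adj x -> uniq x.
Proof. by move=> cx; apply/tuple_uniqP => i j E; apply: contrapT => /eqP /cx []. Qed.

Lemma clique_tperm n (s : 'S_n.+1) (x : n.+1.-tuple T) :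
  clique adj (tperm_tuple s x) <-> clique adj x.
Proof.
suff cl t (y : n.+1.-tuple T) : clique adj y -> clique adj (tperm_tuple t y).
  by split=> [/(cl (s^-1)%g)|/cl //]; rewrite tperm_tupleM mulVg tperm_tuple1.
by move=> cy i j ij; rewrite !tnth_mktuple; apply: cy; rewrite (inj_eq perm_inj).
Qed.

Lemma clique_behead n (v : T) (y : n.+1.-tuple T) :
  clique adj (cons_tuple v y) -> clique adj y.
Proof.
move=> cx i j ij; have := cx (lift ord0 i) (lift ord0 j).
by rewrite !tnthS (inj_eq (@lift_inj _ ord0)); apply.
Qed.

Lemma clique_cons n (v : T) (y : n.+1.-tuple T) : clique adj y ->
  (forall k, v <> tnth y k /\ adj v (tnth y k)) -> clique adj (cons_tuple v y).
Proof.
move=> cy vy i j; case: (unliftP ord0 i) => [i'|] ->; case: (unliftP ord0 j) => [j'|] ->.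
- by rewrite !tnthS (inj_eq (@lift_inj _ ord0)); apply: cy.
- rewrite tnthS tnth0 => _; have [nvy avy] := vy i'.
  by split; [move=> e; apply: nvy | apply: adj_sym].
- by rewrite tnthS tnth0 => _; apply: vy.
- by rewrite eqxx.
Qed.

(* An alternating chain is determined by its values on increasing tuples;
   [restrict_incr] keeps only these, and [alternate] antisymmetrizes an ordered
   chain over the orderings of each clique. *)
Definition restrict_incr n (c : n.+1.-tuple T -> A) : n.+1.-tuple T -> A :=
  fun x => if increasing x then c x else 0.

Definition alternate n (c : n.+1.-tuple T -> A) : n.+1.-tuple T -> A := fun x =>
  if `[< clique adj x >] then
    \sum_(s : 'S_n.+1) signz (odd_perm s) (c (tperm_tuple s x)) else 0.

Lemma supp_in_restrict_incr n W (c : n.+1.-tuple T -> A) :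
  supp_in W c -> supp_in W (restrict_incr c).
Proof. by move=> H x; rewrite /restrict_incr; case: ifP => _; [apply: H | rewrite eqxx]. Qed.

Lemma restrict_incr_fin_additive n : fin_additive (@restrict_incr n).
Proof.
split=> [c /fin_supp_in [W [_ H]]|c c' _ _]; first exact/supp_in_fin/supp_in_restrict_incr/H.
by apply: funext => x; rewrite /restrict_incr /chain_add; case: ifP; rewrite ?addr0.
Qed.

Lemma supp_in_alternate n W (c : n.+1.-tuple T -> A) :
  supp_in W c -> supp_in W (alternate c).
Proof.
move=> H x; rewrite /alternate; case: ifP => _; last by rewrite eqxx.
by move=> /sumr_neq0 [s]; rewrite signz_eq0 => /H Hs k; rewrite (tnth_tperm_tupleV s).
Qed.

Lemma alternate_fin_additive n : fin_additive (@alternate n).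
Proof.
split=> [c /fin_supp_in [W [_ H]]|c c' _ _]; first exact/supp_in_fin/supp_in_alternate/H.
apply: funext => x; rewrite /alternate /chain_add; case: ifP => _; last by rewrite addr0.
by rewrite -big_split; apply: eq_bigr => s _; rewrite signzD.
Qed.

Lemma alternate_tperm n (c : n.+1.-tuple T -> A) (t : 'S_n.+1) x :
  alternate c (tperm_tuple t x) = signz (odd_perm t) (alternate c x).
Proof.
rewrite /alternate; have -> : `[< clique adj (tperm_tuple t x) >] = `[< clique adj x >].
  by apply/asboolP/asboolP => /clique_tperm.
case: ifP => _; last by rewrite signz0.
rewrite signz_sum [RHS](reindex_inj (mulIg t)) /=.
apply: eq_bigr => s _; rewrite tperm_tupleM odd_permM.
by case: (odd_perm s); case: (odd_perm t) => /=; rewrite ?opprK.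
Qed.

Lemma alternate_adm n (c : n.+1.-tuple T -> A) : fin_supp c -> CLadm adj (alternate c).
Proof.
move=> fc; split; [exact: (alternate_fin_additive n).1 | | exact: alternate_tperm].
by move=> x; rewrite /alternate; case: ifP => [/asboolP //|]; rewrite eqxx.
Qed.

Lemma restrict_incr_adm n (c : n.+1.-tuple T -> A) U : CLadm adj c -> sigmaG adj U ->
  VRadm U (restrict_incr c).
Proof.
case=> fc cc _ sU; split; first exact: (restrict_incr_fin_additive n).1.
move=> x; rewrite /restrict_incr; case: ifP => _; last by rewrite eqxx.
by move=> /cc cx i j ij; apply: sU; left; apply: (cx i j _).2; rewrite neq_ltn ij.
Qed.

Lemma alternate_restrict_incr n (c : n.+1.-tuple T -> A) :
  CLadm adj c -> alternate (restrict_incr c) = c.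
Proof.
case=> _ cc ac; apply: funext => x; rewrite /alternate /restrict_incr.
case: ifP => [/asboolP cx | /asboolP ncx]; last by apply/esym/eqP; apply: contraT => /cc.
have [s0 H0] := increasing_sort (clique_uniq cx).
rewrite (bigD1 s0) //= H0 big1 ?addr0; first by rewrite ac signzK.
move=> s ss0; case: ifP => Hs; last exact: signz0.
by rewrite (increasing_sort_uniq (clique_uniq cx) Hs H0) eqxx in ss0.
Qed.

Lemma restrict_incr_VRbd n (c : n.+2.-tuple T -> A) : CLadm adj c ->
  VRbd (restrict_incr c) = restrict_incr (CLbd c).
Proof.
case=> fc cc ac; apply: funext => y; have [W [uW HW]] := fin_supp_in fc.
rewrite (VRbd_seq y uW (supp_in_restrict_incr HW)) exchange_big /=.
rewrite /restrict_incr /CLbd (fsumT_seq uW); last first.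
  by move=> v vW; apply/eqP; apply: contraNT vW => /HW/(_ ord0); rewrite tnth0.
transitivity (\sum_(v <- W) if increasing y then c (cons_tuple v y) else 0); last first.
  by case: ifP => _ //; rewrite big1.
apply: eq_bigr => v _.
have cy (i : 'I_n.+2) : signz (odd i) (c (tins i v y)) = c (cons_tuple v y).
  by rewrite -{1}(tperm_tuple1 y) tins_tperm ac odd_lift_perm odd_perm1 /= !addbF signzK.
under eq_bigr => i _ do rewrite (fun_if (signz (odd i))) signz0 cy.
case: (eqVneq (c (cons_tuple v y)) 0) => [->|cv].
  by rewrite if_same big1 // => i _; rewrite if_same.
apply: sum_increasing_tins; apply/tnthP => -[k vk].
by have := cc _ cv ord0 (lift ord0 k) (neq_lift _ _); rewrite tnth0 tnthS vk => -[].
Qed.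

Lemma alternate_cons_nonclique n (c : n.+2.-tuple T -> A) (v : T) (y : n.+1.-tuple T) :
  (forall x, c x != 0 -> VRsimplex graph_entourage x) -> clique adj y ->
  ~ clique adj (cons_tuple v y) ->
  \sum_(t : 'S_n.+2) signz (odd_perm t) (c (tperm_tuple t (cons_tuple v y))) = 0.
Proof.
move=> cE cy ncv; have [k vk] : exists k, ~ (v <> tnth y k /\ adj v (tnth y k)).
  by apply: contrapT => /forallNP vy; apply/ncv/clique_cons => // k; apply: contrapT.
have [eq_vk|] := pselect (v = tnth y k).
  by apply: (alt_sum_repeat _ (neq_lift ord0 k)); rewrite tnth0 tnthS.
move=> ne_vk; apply: big1 => t _; apply/eqP; rewrite signz_eq0; apply: contraT => /cE ct.
have [avk|/ne_vk //] : graph_entourage (v, tnth y k).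
  have := VRsimplex_tperm ct (neq_lift ord0 k); rewrite tnth0 tnthS.
  by case=> // /graph_entourage_sym.
by exfalso; apply: vk; split.
Qed.

Lemma alternate_VRbd n (c : n.+2.-tuple T -> A) : VRadm graph_entourage c ->
  alternate (VRbd c) = CLbd (alternate c).
Proof.
case=> fc cE; apply: funext => y; have [W [uW HW]] := fin_supp_in fc.
rewrite /alternate /CLbd; case: ifP => [/asboolP cy | /asboolP ncy]; last first.
  by apply/esym/fsbig1 => v _; case: ifP => // /asboolP /clique_behead.
rewrite (fsumT_seq uW); last first.
  move=> v vW; case: ifP => // _; apply: big1 => t _.
  case: (eqVneq (c (tperm_tuple t (cons_tuple v y))) 0) => [->|]; first exact: signz0.
  by move/HW/(_ ((t^-1)%g ord0)); rewrite tnth_mktuple permKV tnth0 (negbTE vW).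
under eq_bigr => s _ do rewrite (VRbd_seq _ uW HW) signz_sum.
under eq_bigr => s _ do under eq_bigr => i _ do rewrite signz_sum.
rewrite exchange_big /=; under eq_bigr => i _ do rewrite exchange_big /=.
rewrite exchange_big /=; apply: eq_bigr => v _.
case: ifP => [_|/asboolP ncv]; last rewrite -[RHS](alternate_cons_nonclique cE cy ncv);
  rewrite big_perm_lift /=; apply: eq_bigr => i _; apply: eq_bigr => s _;
  rewrite tins_tperm odd_lift_perm /=;
  by case: (odd i); case: (odd_perm s) => /=; rewrite ?opprK.
Qed.

End Comparison.

Arguments restrict_incr_fin_additive {V A n}.
Arguments alternate_fin_additive {V} adj {A n}.

(** * A chain homotopy between [sort_proj] and the identity *)

Section Homotopy.
Variables (V : Type) (adj : V -> V -> Prop).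
Hypothesis adj_sym : forall x y, adj x y -> adj y x.
Variable A : zmodType.
Local Notation T := {classic V}.
Local Notation E := (graph_entourage adj).

Definition sort_proj n (c : n.+1.-tuple T -> A) := restrict_incr (alternate adj c).

Lemma sort_proj_fin_additive n : fin_additive (@sort_proj n).
Proof.
by apply: fin_additive_comp; [apply: alternate_fin_additive | apply: restrict_incr_fin_additive].
Qed.

Lemma supp_in_sort_proj n W (c : n.+1.-tuple T -> A) :
  supp_in W c -> supp_in W (sort_proj c).
Proof. by move=> H; apply/supp_in_restrict_incr/supp_in_alternate. Qed.

Lemma sort_proj_VRbd n (c : n.+2.-tuple T -> A) : VRadm E c ->
  VRbd (sort_proj c) = sort_proj (VRbd c).
Proof.
move=> ac; rewrite /sort_proj (@restrict_incr_VRbd _ adj) ?alternate_VRbd //.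
by apply: alternate_adm; case: ac.
Qed.

Lemma sort_proj_vertex (c : 1.-tuple T -> A) : sort_proj c = c.
Proof.
apply: funext => x; rewrite /sort_proj /restrict_incr /alternate.
have -> : increasing x by case/tupleP: x => x0 t; rewrite tuple0.
have -> : `[< clique adj x >] by apply/asboolP => i j; rewrite !ord1 eqxx.
rewrite (big_pred1 1%g) => [|s]; first by rewrite odd_perm1 tperm_tuple1.
by apply/esym/eqP/permP => i; rewrite (ord1 (s i)) (ord1 ((1%g : 'S_1) i)).
Qed.

Lemma VRsimplex_carried n m (x : n.+1.-tuple T) (z : m.+1.-tuple T) :
  VRsimplex E x -> (forall k, tnth z k \in val x) -> VRsimplex E z.
Proof.
move=> sx H i j ij; have /tnthP [p ->] := H i; have /tnthP [q ->] := H j.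
have [pq|qp|/val_inj ->] := ltngtP p q; [exact: sx | exact/graph_entourage_sym/sx | by right].
Qed.

Lemma VRadm_carried n m (x : n.+1.-tuple T) (c : m.+1.-tuple T -> A) :
  VRsimplex E x -> supp_in (val x) c -> VRadm E c.
Proof. by move=> sx H; split=> [|z /H]; [exact: supp_in_fin H | exact: VRsimplex_carried]. Qed.

(* Acyclic carriers: on an elementary chain [d] on a simplex [x] of X^E,
   [htpy] is the cone from the first vertex of [x] over
   [d - sort_proj d - htpy (VRbd d)], which by induction is a cycle carried by
   [x]. *)
Definition htpy_cone m (D : (m.+1.-tuple T -> A) -> (m.+2.-tuple T -> A))
    (x : m.+2.-tuple T) (d : m.+2.-tuple T -> A) : m.+3.-tuple T -> A :=
  cone (thead x) (chain_sub (chain_sub d (sort_proj d)) (D (VRbd d))).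

Fixpoint htpy n : (n.+1.-tuple T -> A) -> (n.+2.-tuple T -> A) :=
  match n return (n.+1.-tuple T -> A) -> (n.+2.-tuple T -> A) with
  | 0 => fun _ _ => 0
  | m.+1 => fun c z =>
      \sum_(x \in [set: m.+2.-tuple T]) htpy_cone (@htpy m) x (delta_chain x (c x)) z
  end.

Lemma htpy_cone_fin_additive m (D : (m.+1.-tuple T -> A) -> (m.+2.-tuple T -> A)) x :
  fin_additive D -> fin_additive (htpy_cone D x).
Proof.
move=> hD; have hL : fin_additive (fun d : m.+2.-tuple T -> A =>
    chain_sub (chain_sub d (sort_proj d)) (D (VRbd d))).
  apply: (fin_additive_sub (L' := fun d => D (VRbd d))).
    exact: (fin_additive_sub (L := id) fin_additive_id (sort_proj_fin_additive _)).
  exact: fin_additive_comp VRbd_fin_additive hD.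
exact: fin_additive_comp hL (cone_fin_additive _).
Qed.

Lemma supp_in_htpy_cone m (D : (m.+1.-tuple T -> A) -> (m.+2.-tuple T -> A)) W x d :
  (forall c, supp_in W c -> supp_in W (D c)) -> thead x \in W -> supp_in W d ->
  supp_in W (htpy_cone D x d).
Proof.
move=> HD xW Hd; apply: supp_in_cone; first exact: xW.
by apply/supp_in_sub/HD/supp_in_VRbd/Hd; apply/supp_in_sub/supp_in_sort_proj/Hd.
Qed.

Lemma htpy_seq m (c : m.+2.-tuple T -> A) (S : seq (m.+2.-tuple T)) :
  fin_additive (@htpy m) -> uniq S -> (forall x, c x != 0 -> x \in S) ->
  htpy c = fun z => \sum_(x <- S) htpy_cone (@htpy m) x (delta_chain x (c x)) z.
Proof.
move=> hD uS HS; apply: funext => z /=; rewrite (fsumT_seq uS) // => x xS.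
have -> : c x = 0 by apply/eqP; apply: contraT => /HS; rewrite (negbTE xS).
by rewrite delta_chain0 (fin_additive0 (htpy_cone_fin_additive _ hD)).
Qed.

Lemma htpy_fin_additive m : fin_additive (@htpy m).
Proof.
elim: m => [|m IH].
  by split=> [c _|c c' _ _]; [exact: fin_supp0 | apply: funext => z; rewrite /chain_add addr0].
have hK x := htpy_cone_fin_additive x IH.
split=> [c fc|c c' fc fc'].
  have [S [uS HS]] := fin_supp_seq fc; rewrite (htpy_seq IH uS HS).
  by apply: fin_supp_sum => x; apply: (hK x).1; apply: fin_supp_delta.
have [S1 [_ H1]] := fin_supp_seq fc; have [S2 [_ H2]] := fin_supp_seq fc'.
have uS : uniq (undup (S1 ++ S2)) := undup_uniq _.
have HS1 x : c x != 0 -> x \in undup (S1 ++ S2) by move/H1; rewrite mem_undup mem_cat => ->.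
have HS2 x : c' x != 0 -> x \in undup (S1 ++ S2).
  by move/H2; rewrite mem_undup mem_cat => ->; rewrite orbT.
have HS x : chain_add c c' x != 0 -> x \in undup (S1 ++ S2).
  by rewrite /chain_add; case: (eqVneq (c x) 0) => [->|/HS1 //]; rewrite add0r => /HS2.
rewrite (htpy_seq IH uS HS) (htpy_seq IH uS HS1) (htpy_seq IH uS HS2).
apply: funext => z; rewrite /chain_add -big_split; apply: eq_bigr => x _.
by rewrite delta_chainD (hK x).2 //; apply: fin_supp_delta.
Qed.

Lemma htpy_neq0 m (c : m.+2.-tuple T -> A) z : htpy c z != 0 ->
  exists2 x, c x != 0 & htpy_cone (@htpy m) x (delta_chain x (c x)) z != 0.
Proof.
move=> /fsumr_neq0 [x Hx]; exists x => //; apply: contraNneq Hx => ->.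
by rewrite delta_chain0 (fin_additive0 (htpy_cone_fin_additive _ (htpy_fin_additive _))).
Qed.

Lemma supp_in_htpy m W (c : m.+1.-tuple T -> A) : supp_in W c -> supp_in W (htpy c).
Proof.
elim: m W c => [|m IH] W c H z; first by rewrite eqxx.
move=> /htpy_neq0 [x /H Hx]; apply: (supp_in_htpy_cone (IH W) (Hx ord0)).
exact: supp_in_delta.
Qed.

Lemma htpy_adm m (c : m.+1.-tuple T -> A) : VRadm E c -> VRadm E (htpy c).
Proof.
case: m c => [|m] c [fc cE]; first by split=> [|z]; [exact: fin_supp0 | rewrite eqxx].
split=> [|z]; first exact: (htpy_fin_additive _).1.
move=> /htpy_neq0 [x /cE sx Kx]; apply: (VRsimplex_carried sx).
have Hd : supp_in (val x) (delta_chain x (c x)) by apply: supp_in_delta => k; apply: mem_tnth.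
exact: (supp_in_htpy_cone (@supp_in_htpy _ _) (mem_tnth _ _) Hd Kx).
Qed.

Lemma htpy_delta m (x : m.+2.-tuple T) a :
  htpy (delta_chain x a) = htpy_cone (@htpy m) x (delta_chain x a).
Proof.
have Hx y : delta_chain x a y != 0 -> y \in [:: x].
  by rewrite /delta_chain mem_seq1; case: (eqVneq y x) => //; rewrite eqxx.
rewrite (htpy_seq (htpy_fin_additive _) (erefl : uniq [:: x]) Hx).
by apply: funext => z; rewrite big_seq1 {2}/delta_chain eqxx.
Qed.

Definition htpy_on_cycles m := forall z : m.+1.-tuple T -> A,
  VRadm E z -> is_cycle (@VRbd T A) z -> VRbd (htpy z) = chain_sub z (sort_proj z).

Lemma htpy_on_cycles0 : htpy_on_cycles 0.
Proof.
move=> z _ _; rewrite sort_proj_vertex /= (fin_additive0 VRbd_fin_additive).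
by apply: funext => y; rewrite /chain_sub subrr.
Qed.

Lemma VRbd_delta_cycle m (x : m.+2.-tuple T) (a : A) :
  is_cycle (@VRbd T A) (VRbd (delta_chain x a)).
Proof. by case: m x => [|m] x //=; apply: VRbdK_delta. Qed.

Lemma VRbd_htpy_cone m (x : m.+2.-tuple T) a : htpy_on_cycles m -> VRsimplex E x ->
  let d := delta_chain x a in
  VRbd (htpy_cone (@htpy m) x d) = chain_sub (chain_sub d (sort_proj d)) (htpy (VRbd d)).
Proof.
move=> IH sx d; have xx : supp_in (val x) d by apply: supp_in_delta => k; apply: mem_tnth.
have ad : VRadm E d := VRadm_carried sx xx.
have abd : VRadm E (VRbd d) := VRadm_carried sx (supp_in_VRbd xx).
have [fd _] := ad; have fpd := (sort_proj_fin_additive _).1 _ fd.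
have fdpd := fin_supp_sub fd fpd; have [fhd _] := htpy_adm abd.
rewrite /htpy_cone VRbd_cone !(fin_additiveB VRbd_fin_additive) //.
rewrite sort_proj_VRbd // IH //; last exact: VRbd_delta_cycle.
rewrite [X in cone _ X](_ : _ = fun _ => 0); last first.
  by apply: funext => y; rewrite /chain_sub subrr.
by rewrite (fin_additive0 (cone_fin_additive _)); apply: funext => y; rewrite /chain_sub subr0.
Qed.

Lemma htpy_homotopy_eq m (c : m.+2.-tuple T -> A) : htpy_on_cycles m -> VRadm E c ->
  chain_add (VRbd (htpy c)) (htpy (VRbd c)) = chain_sub c (sort_proj c).
Proof.
move=> IH [fc cE].
apply: (fin_additive_delta (L := fun c => chain_add (VRbd (htpy c)) (htpy (VRbd c)))
  (L' := fun c => chain_sub c (sort_proj c))) fc _ => [||x /cE sx].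
- apply: fin_additive_add; first exact: fin_additive_comp (htpy_fin_additive _) VRbd_fin_additive.
  exact: fin_additive_comp VRbd_fin_additive (htpy_fin_additive _).
- exact: (fin_additive_sub (L := id) fin_additive_id (sort_proj_fin_additive _)).
rewrite htpy_delta (VRbd_htpy_cone _ IH sx).
by apply: funext => y; rewrite /chain_add /chain_sub subrK.
Qed.

Lemma htpy_on_cycles_all m : htpy_on_cycles m.
Proof.
elim: m => [|m IH]; first exact: htpy_on_cycles0.
move=> z az /= cz; have := htpy_homotopy_eq IH az; rewrite cz (fin_additive0 (htpy_fin_additive _)).
by move=> <-; apply: funext => y; rewrite /chain_add addr0.
Qed.

End Homotopy.

(** * The inverse limit over σ(G) *)

Section Limit.
Variables (V : Type) (adj : V -> V -> Prop).
Hypothesis adj_sym : forall x y, adj x y -> adj y x.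
Variables (A : zmodType) (n : nat).
Local Notation T := {classic V}.
Local Notation E := (graph_entourage adj).
Local Notation HG := (VRhomology_graph adj A n).
Local Notation HS := (VRhomology (sigmaG adj) A n).

Lemma sigmaG_entourage : sigmaG adj E.
Proof. by move=> x y. Qed.

Lemma sigmaG_sub U : sigmaG adj U -> E `<=` U.
Proof. by move=> sU [x y]; apply: sU. Qed.

Lemma VRhom_refl U (c : n.+1.-tuple T -> A) : sg_eqv (VRhom A U n) c c.
Proof.
exists (fun _ => 0); split; first by split=> [|x]; [apply: fin_supp0 | rewrite eqxx].
by rewrite (fin_additive0 VRbd_fin_additive); apply: funext => x; rewrite /chain_sub subrr.
Qed.

Lemma CLhom_refl (c : n.+1.-tuple T -> A) : sg_eqv HG c c.
Proof.
exists (fun _ => 0); split.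
  by split=> [|x|s x]; [apply: fin_supp0 | rewrite eqxx | rewrite signz0].
by apply: funext => x; rewrite /chain_sub subrr; apply/esym/fsbig1.
Qed.

Lemma restrict_incr_mem (c : n.+1.-tuple T -> A) :
  sg_mem HG c -> sg_mem HS (fun _ => restrict_incr c).
Proof.
case=> ac cc; split=> [U sU|U U' _ _ _]; last exact: VRhom_refl.
split; first exact: restrict_incr_adm ac sU.
by case: n c ac cc => [//|m] c ac /= cc; rewrite (restrict_incr_VRbd ac) cc;
  apply: (fin_additive0 restrict_incr_fin_additive).
Qed.

Lemma alternate_mem F : sg_mem HS F -> sg_mem HG (alternate adj (F E)).
Proof.
case=> /(_ E sigmaG_entourage) [aF cF] _; split; first by apply: alternate_adm; case: aF.
by case: n F aF cF => [//|m] F aF /= cF; rewrite -alternate_VRbd // cF;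
  apply: (fin_additive0 (alternate_fin_additive adj)).
Qed.

Lemma restrict_incr_eqv c c' : sg_mem HG c -> sg_mem HG c' -> sg_eqv HG c c' ->
  sg_eqv HS (fun _ => restrict_incr c) (fun _ => restrict_incr c').
Proof.
move=> [[fc _ _] _] [[fc' _ _] _] [b [ab Eb]] U sU.
exists (restrict_incr b); split; first exact: restrict_incr_adm ab sU.
by rewrite (restrict_incr_VRbd ab) -Eb (fin_additiveB restrict_incr_fin_additive).
Qed.

Lemma alternate_eqv F F' : sg_mem HS F -> sg_mem HS F' -> sg_eqv HS F F' ->
  sg_eqv HG (alternate adj (F E)) (alternate adj (F' E)).
Proof.
move=> [/(_ E sigmaG_entourage) [[fF _] _] _] [/(_ E sigmaG_entourage) [[fF' _] _] _].
move=> /(_ E sigmaG_entourage) [b [ab Eb]].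
exists (alternate adj b); split; first by apply: alternate_adm; case: ab.
by rewrite -alternate_VRbd // -Eb (fin_additiveB (alternate_fin_additive adj)).
Qed.

Lemma restrict_incr_add c c' : sg_mem HG c -> sg_mem HG c' ->
  sg_eqv HS (fun _ => restrict_incr (sg_add HG c c'))
    (sg_add HS (fun _ => restrict_incr c) (fun _ => restrict_incr c')).
Proof.
move=> [[fc _ _] _] [[fc' _ _] _] U _ /=.
rewrite (restrict_incr_fin_additive.2 _ _ fc fc'); exact: VRhom_refl.
Qed.

Lemma alternate_restrict_incr_eqv c : sg_mem HG c -> sg_eqv HG (alternate adj (restrict_incr c)) c.
Proof. by case=> ac _; rewrite alternate_restrict_incr //; apply: CLhom_refl. Qed.

(* [F U] is homologous to [F E] by compatibility, and [F E] to
   [sort_proj (F E)] through [htpy]. *)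
Lemma restrict_incr_alternate_eqv F : sg_mem HS F ->
  sg_eqv HS (fun _ => restrict_incr (alternate adj (F E))) F.
Proof.
move=> [HF HC] U sU /=; have sEU := sigmaG_sub sU.
have [aE cE] := HF E sigmaG_entourage.
have [b [ab Eb]] := HC U E sU sigmaG_entourage sEU.
have ah := htpy_adm adj_sym aE; have Eh := htpy_on_cycles_all adj_sym aE cE.
exists (chain_sub b (htpy adj (F E))); split.
  exact: VRadm_chain_sub ab (VRadm_mono sEU ah).
rewrite (fin_additiveB VRbd_fin_additive ab.1 ah.1) -Eb Eh.
by apply: funext => x; rewrite /chain_sub /sort_proj opprB [RHS]addrC [RHS]addrA subrK.
Qed.

End Limit.

Unset Implicit Arguments.

Theorem theorem5p2 (V : Type) (adj : V -> V -> Prop)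
    (adj_sym : forall x y, adj x y -> adj y x) (A : zmodType) :
  forall n : nat, sg_iso (VRhomology_graph adj A n) (VRhomology (sigmaG adj) A n).
Proof.
move=> n; exists (fun c _ => restrict_incr c).
exists (fun F => alternate adj (F (graph_entourage adj))); split.
- by split=> [c|F]; [apply: restrict_incr_mem | apply: alternate_mem].
- by move=> c c' ? ?; apply: restrict_incr_eqv.
- by split=> [F F' ? ?|c c' ? ?]; [apply: alternate_eqv | apply: restrict_incr_add].
- by move=> c; apply: alternate_restrict_incr_eqv.
- by move=> F; apply: restrict_incr_alternate_eqv.
Qed.
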